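(* For every $\varepsilon>0$ and all $N\geqslant1$, $$\sum_{\substack{m,n\geqslant1\\ mn\leqslant N}}(m,n^\infty)^{\frac12}\big((mn)^\sharp\big)^{\frac14}\ll_\varepsilon N^{1+\varepsilon}.$$
   Context: $(m,n^\infty)$ is the largest divisor of $m$ all of whose prime factors divide $n$. For a positive integer $a$, $a^\sharp=\prod_{p^\nu\| a,\ \nu\geqslant2}p^\nu$ is its squarefull part. *)

From mathcomp Require Import all_boot.
From Stdlib Require Import Reals.

(* (m, n^oo): the largest divisor of m all of whose prime factors divide n,
   i.e. the \pi(n)-part of m. *)
Definition coprime_part (m n : nat) : nat := m`_(\pi(n)).

(* a^#: squarefull part of a, the product of p^nu over p^nu || a with nu >= 2. *)
Definition sqfull (a : nat) : nat := a`_[pred p | 1 < logn p a].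

Open Scope R_scope.

Definition summand (m n : nat) : R :=
  Rpower (INR (coprime_part m n)) (1/2) * Rpower (INR (sqfull (m * n))) (1/4).

Definition S (N : nat) : R :=
  sum_f_R0 (fun m => sum_f_R0 (fun n =>
     if (Nat.leb 1 m && Nat.leb 1 n && Nat.leb (m * n) N)%bool
     then summand m n else 0) N) N.

From HB Require Import structures.
From Stdlib Require Import Reals Lra.
From mathcomp Require Import all_boot.

Set Implicit Arguments.
Unset Strict Implicit.
Unset Printing Implicit Defensive.

(* Rankin's trick: for mn <= N each summand is at most N^(1+eps) times the weight
   w(m, n) = summand m n * (mn)^-(1+eps), so S(N) <= N^(1+eps) * sum_(m, n <= N) w(m, n).
   Both (m, n^oo) and (mn)^# factor over coprime pairs, so w is multiplicative in the
   pair (m, n) and the sum is bounded by the Euler product over p <= N of the local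
   sums over (p^i, p^j).  Since (p^i, (p^j)^oo) is nontrivial only for j >= 1 and
   (p^(i+j))^# only for i + j >= 2, w(p^i, p^j) <= 2 p^-(1+eps) 2^(-(i+j)/4) whenever
   i + j > 0; so every local factor is 1 + O(p^-(1+eps)) and the product is at most
   exp(O(sum_p p^-(1+eps))) = exp(O(1/eps)). *)

Section PrimeParts.
Local Open Scope nat_scope.

Lemma partn_pi_coprimeMr a b d : 0 < b -> 0 < d ->
  coprime a d -> a`_\pi(b * d) = a`_\pi(b).
Proof.
move=> b0 d0 cad; apply: eq_in_partn => p; rewrite mem_primes => /and3P[pp _ pa].
rewrite !inE primesM // [p \in primes d]mem_primes pp d0 /=.
by have := coprime_dvdl pa cad; rewrite prime_coprime // => /negbTE ->; rewrite orbF.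
Qed.

Lemma coprime_partM a b c d : 0 < a -> 0 < b -> 0 < c -> 0 < d ->
  coprime (a * b) (c * d) ->
  coprime_part (a * c) (b * d) = coprime_part a b * coprime_part c d.
Proof.
move=> a0 b0 c0 d0; rewrite coprimeMl !coprimeMr => /andP[/andP[_ cad] /andP[cbc _]].
rewrite /coprime_part partnM // (partn_pi_coprimeMr b0 d0 cad) [b * d]mulnC.
by rewrite (partn_pi_coprimeMr d0 b0) // coprime_sym.
Qed.

Lemma sqfullM x y : 0 < x -> 0 < y -> coprime x y ->
  sqfull (x * y) = sqfull x * sqfull y.
Proof.
move=> x0 y0 cxy; rewrite /sqfull partnM //; congr (_ * _).
  apply: eq_in_partn => p; rewrite mem_primes => /and3P[_ _ px].
  by rewrite !inE lognM // (logn_coprime (coprime_dvdl px cxy)) addn0.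
rewrite coprime_sym in cxy; apply: eq_in_partn => p; rewrite mem_primes => /and3P[_ _ py].
by rewrite !inE lognM // (logn_coprime (coprime_dvdl py cxy)).
Qed.

Lemma coprime_part_pfactor p i j : prime p ->
  coprime_part (p ^ i) (p ^ j) = p ^ (if j == 0 then 0 else i).
Proof.
move=> pp; rewrite /coprime_part; case: j => [|j] /=.
  by rewrite expn0 part_p'nat // pnatX pnatE.
by rewrite pi_of_exp // part_pnat_id // pnatX pnat_pi ?prime_gt0.
Qed.

Lemma sqfull_pfactor p k : prime p ->
  sqfull (p ^ k) = p ^ (if 1 < k then k else 0).
Proof.
move=> pp; rewrite /sqfull; case: k => [|k]; first by rewrite expn0 partn1.
have pi_pk : {in \pi(p ^ k.+1), [pred q | 1 < logn q (p ^ k.+1)] =i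
                 (if 1 < k.+1 then predT else pred0)}.
  move=> q; rewrite pi_of_exp // (pi_of_prime pp) inE => /eqP -> /=.
  by rewrite inE pfactorK //; case: ifP.
rewrite (eq_in_partn pi_pk); case: ifP => _; first by rewrite partnT ?expn_gt0 ?prime_gt0.
by rewrite expn0 part_p'nat // pnatX pnatE.
Qed.

Lemma coprime_prodr (I : eqType) (r : seq I) (F : I -> nat) a :
  (forall i, i \in r -> coprime a (F i)) -> coprime a (\prod_(i <- r) F i).
Proof.
elim: r => [|i r IH] cop; first by rewrite big_nil coprimen1.
rewrite big_cons coprimeMr cop ?mem_head //= IH // => j rj.
by rewrite cop // in_cons rj orbT.
Qed.

Definition primes_upto (N : nat) : seq nat := [seq p <- iota 0 N.+1 | prime p].

Lemma prod_primes_upto_logn N m : 0 < m -> m <= N ->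
  \prod_(p <- primes_upto N) p ^ logn p m = m.
Proof.
move=> m0 mN; rewrite big_filter -{2}(partnT m0) (widen_partn _ mN).
rewrite big_mkcond [RHS]big_mkcond; apply: eq_bigr => p _ /=.
by case pp: (prime p); rewrite // lognE pp.
Qed.

End PrimeParts.

Open Scope R_scope.

Lemma Rplus_associative : associative Rplus.
Proof. by move=> x y z; rewrite Rplus_assoc. Qed.

Lemma Rmult_associative : associative Rmult.
Proof. by move=> x y z; rewrite Rmult_assoc. Qed.

HB.instance Definition _ :=
  Monoid.isComLaw.Build R 0 Rplus Rplus_associative Rplus_comm Rplus_0_l.
HB.instance Definition _ :=
  Monoid.isComLaw.Build R 1 Rmult Rmult_associative Rmult_comm Rmult_1_l.
HB.instance Definition _ := Monoid.isMulLaw.Build R 0 Rmult Rmult_0_l Rmult_0_r.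
HB.instance Definition _ :=
  Monoid.isAddLaw.Build R Rmult Rplus Rmult_plus_distr_r Rmult_plus_distr_l.

Section RealBigops.
Variables (I : Type) (r : seq I) (P : pred I).

Lemma sumR_ge0 (F : I -> R) :
  (forall i, P i -> 0 <= F i) -> 0 <= \big[Rplus/0]_(i <- r | P i) F i.
Proof. by move=> F0; elim/big_ind: _ => // *; lra. Qed.

Lemma ler_sumR (F G : I -> R) : (forall i, P i -> F i <= G i) ->
  \big[Rplus/0]_(i <- r | P i) F i <= \big[Rplus/0]_(i <- r | P i) G i.
Proof. by move=> FG; elim/big_ind2: _ => // *; lra. Qed.

Lemma ler_prodR (F G : I -> R) : (forall i, P i -> 0 <= F i <= G i) ->
  \big[Rmult/1]_(i <- r | P i) F i <= \big[Rmult/1]_(i <- r | P i) G i.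
Proof.
move=> FG; suff: 0 <= \big[Rmult/1]_(i <- r | P i) F i <= \big[Rmult/1]_(i <- r | P i) G i.
  by case.
elim/big_ind2: _ => [|x1 x2 y1 y2 h1 h2|i /FG] //; first lra.
split; first by apply: Rmult_le_pos; lra.
by apply: Rmult_le_compat; lra.
Qed.

Lemma exp_sumR (F : I -> R) :
  exp (\big[Rplus/0]_(i <- r | P i) F i) = \big[Rmult/1]_(i <- r | P i) exp (F i).
Proof. by elim/big_rec2: _ => [|i x y _ <-]; rewrite ?exp_0 ?exp_plus. Qed.

Lemma prodR_1addR_le_exp (F : I -> R) : (forall i, P i -> 0 <= F i) ->
  \big[Rmult/1]_(i <- r | P i) (1 + F i) <= exp (\big[Rplus/0]_(i <- r | P i) F i).
Proof.
move=> F0; rewrite exp_sumR; apply: ler_prodR => i /F0 Fi0.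
by split; [lra | exact: exp_ineq1_le].
Qed.

End RealBigops.

Lemma ler_sumR_subset (T : finType) (A : {pred T}) (F : T -> R) :
  (forall x, 0 <= F x) -> \big[Rplus/0]_(x in A) F x <= \big[Rplus/0]_x F x.
Proof.
move=> F0; rewrite big_mkcond; apply: ler_sumR => x _.
by case: (x \in A); [exact: Rle_refl | exact: F0].
Qed.

Lemma sum_f_R0_big (F : nat -> R) N : sum_f_R0 F N = \big[Rplus/0]_(i < N.+1) F i.
Proof. by elim: N => [|N IH]; rewrite big_ord_recr /= ?big_ord0 ?IH ?Rplus_0_l. Qed.

Lemma Rpower_gt0 x y : 0 < Rpower x y.
Proof. exact: exp_pos. Qed.

Lemma Rpower1 y : Rpower 1 y = 1.
Proof. by rewrite /Rpower ln_1 Rmult_0_r exp_0. Qed.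

Lemma INR_gt0 n : (0 < n)%N -> 0 < INR n.
Proof. by move=> /ltP; exact: lt_0_INR. Qed.

Lemma Rpower_INRM m n x : (0 < m)%N -> (0 < n)%N ->
  Rpower (INR (m * n)) x = Rpower (INR m) x * Rpower (INR n) x.
Proof.
by move=> m0 n0; rewrite -multE mult_INR -Rpower_mult_distr //; apply: INR_gt0.
Qed.

Lemma Rpower_INRX p e x : (0 < p)%N ->
  Rpower (INR (p ^ e)) x = Rpower (INR p) (INR e * x).
Proof.
move=> /INR_gt0 p0; rewrite -Rpower_mult Rpower_pow //; congr Rpower.
by elim: e => [|e IH] //; rewrite expnS -multE mult_INR IH.
Qed.

Lemma exp_le x y : x <= y -> exp x <= exp y.
Proof. by case=> [/exp_increasing/Rlt_le | ->] //; exact: Rle_refl. Qed.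

Section EulerProduct.
Variable F : nat -> nat -> R.
Hypothesis F_ge0 : forall m n, 0 <= F m n.
Hypothesis F11 : F 1 1 = 1.
Hypothesis FM : forall a b c d, (0 < a)%N -> (0 < b)%N -> (0 < c)%N -> (0 < d)%N ->
  coprime (a * b) (c * d) -> F (a * c) (b * d) = F a b * F c d.

Lemma F_prod_pfactor (I : eqType) (s : seq I) (q a b : I -> nat) :
  uniq s -> (forall i, i \in s -> prime (q i)) -> {in s &, injective q} ->
  F (\prod_(i <- s) q i ^ a i) (\prod_(i <- s) q i ^ b i)
  = \big[Rmult/1]_(i <- s) F (q i ^ a i) (q i ^ b i).
Proof.
elim: s => [|x s IH] /=; first by rewrite !big_nil.
move=> /andP[xs us] s_prime q_inj; rewrite !big_cons.
have prime_s i : i \in s -> prime (q i) by move=> si; rewrite s_prime // in_cons si orbT.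
have qx_prime : prime (q x) by rewrite s_prime ?mem_head.
have prod_gt0 e : (0 < \prod_(i <- s) q i ^ e i)%N.
  by rewrite big_seq prodn_cond_gt0 // => i /prime_s pi; rewrite expn_gt0 prime_gt0.
have cop e1 e2 : coprime (q x ^ e1) (\prod_(i <- s) q i ^ e2 i).
  apply: coprime_prodr => i si; rewrite coprimeXl // coprimeXr //.
  rewrite prime_coprime // dvdn_prime2 ?(prime_s i si) //; apply/eqP => qxi.
  have xi : x = i by apply: q_inj; rewrite ?mem_head ?in_cons ?si ?orbT.
  by rewrite xi si in xs.
rewrite FM ?prod_gt0 ?expn_gt0 ?prime_gt0 //; last first.
  by rewrite coprimeMl !coprimeMr !cop.
by rewrite IH // => i j si sj; apply: q_inj; rewrite in_cons ?si ?sj orbT.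
Qed.

Lemma sum_le_prod_local_factors N :
  \big[Rplus/0]_(x : 'I_N.+1 * 'I_N.+1 | (0 < x.1)%N && (0 < x.2)%N) F x.1 x.2
  <= \big[Rmult/1]_(p <- primes_upto N)
       \big[Rplus/0]_(ij : 'I_N.+1 * 'I_N.+1) F (p ^ ij.1) (p ^ ij.2).
Proof.
set s := primes_upto N; set k := size s; pose q (l : 'I_k) := nth 0%N s l.
have s_uniq : uniq s by rewrite filter_uniq ?iota_uniq.
have q_prime l : prime (q l) by have := mem_nth 0%N (ltn_ord l); rewrite mem_filter => /andP[].
have q_inj : injective q by move=> l1 l2 /eqP; rewrite nth_uniq // => /eqP /val_inj.
rewrite (big_nth 0%N) big_mkord bigA_distr_bigA /=.
(* A pair (m, n) is encoded by its two exponent vectors over the primes <= N; this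
   injects the left-hand sum into the expansion of the product. *)
pose decode (phi : {ffun 'I_k -> 'I_N.+1 * 'I_N.+1}) :=
  ((\prod_(l < k) q l ^ (phi l).1)%N, (\prod_(l < k) q l ^ (phi l).2)%N).
pose encode (x : 'I_N.+1 * 'I_N.+1) : {ffun 'I_k -> 'I_N.+1 * 'I_N.+1} :=
  [ffun l => (inord (logn (q l) x.1), inord (logn (q l) x.2))].
have decode_logn (m : 'I_N.+1) : (0 < m)%N ->
    (\prod_(l < k) q l ^ (inord (logn (q l) m) : 'I_N.+1))%N = m.
  move=> m0; have mN : (m <= N)%N by rewrite -ltnS.
  rewrite -[RHS](prod_primes_upto_logn m0 mN) (big_nth 0%N) big_mkord.
  apply: eq_bigr => l _; rewrite inordK // ltnS.
  exact: leq_trans (ltnW (ltn_logl _ m0)) mN.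
pose A := [pred x : 'I_N.+1 * 'I_N.+1 | (0 < x.1)%N && (0 < x.2)%N].
have encodeK : {in A, forall x, decode (encode x) = (val x.1, val x.2)}.
  move=> [m n] /andP[/= m0 n0]; rewrite /decode.
  by under eq_bigr do rewrite ffunE; under [in X in (_, X)]eq_bigr do rewrite ffunE;
     rewrite /= decode_logn // decode_logn.
have encode_inj : {in A &, injective encode}.
  move=> [m n] [m' n'] xA yA /(congr1 decode); rewrite !encodeK //= => -[mm' nn'].
  by rewrite (val_inj mm') (val_inj nn').
rewrite (eq_bigr (fun phi => F (decode phi).1 (decode phi).2)); last first.
  by move=> phi _; rewrite /= F_prod_pfactor ?index_enum_uniq // => l1 l2 _ _ /q_inj.
rewrite (eq_bigr (fun x => F (decode (encode x)).1 (decode (encode x)).2)); last first.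
  by move=> x xA; rewrite encodeK.
rewrite -(big_imset (fun phi => F (decode phi).1 (decode phi).2) encode_inj) /=.
exact: ler_sumR_subset.
Qed.

End EulerProduct.

Definition rankin_weight (eps : R) (m n : nat) : R :=
  summand m n * Rpower (INR (m * n)) (- (1 + eps)).

Lemma rankin_weight_ge0 eps m n : 0 <= rankin_weight eps m n.
Proof.
left; rewrite /rankin_weight /summand.
by apply: Rmult_lt_0_compat; [apply: Rmult_lt_0_compat|]; apply: Rpower_gt0.
Qed.

Lemma rankin_weight11 eps : rankin_weight eps 1 1 = 1.
Proof.
by rewrite /rankin_weight /summand /coprime_part /sqfull muln1 !partn1 !Rpower1 !Rmult_1_l.
Qed.

Lemma rankin_weightM eps a b c d :
  (0 < a)%N -> (0 < b)%N -> (0 < c)%N -> (0 < d)%N -> coprime (a * b) (c * d) ->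
  rankin_weight eps (a * c) (b * d) = rankin_weight eps a b * rankin_weight eps c d.
Proof.
move=> a0 b0 c0 d0 cop; have ab0 : (0 < a * b)%N by rewrite muln_gt0 a0.
have cd0 : (0 < c * d)%N by rewrite muln_gt0 c0.
rewrite /rankin_weight /summand mulnACA coprime_partM // sqfullM //.
by rewrite !Rpower_INRM ?part_gt0 //; ring.
Qed.

Lemma summand_le_rankin_weight eps N m n : 0 <= eps ->
  (0 < m)%N -> (0 < n)%N -> (m * n <= N)%N ->
  summand m n <= Rpower (INR N) (1 + eps) * rankin_weight eps m n.
Proof.
move=> e0 m0 n0 mnN; have mn0 : 0 < INR (m * n) by apply: INR_gt0; rewrite muln_gt0 m0.
have growth : Rpower (INR (m * n)) (1 + eps) <= Rpower (INR N) (1 + eps).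
  by apply: Rle_Rpower_l; [lra | split; [|apply: le_INR; apply/leP]].
have sum0 : 0 <= summand m n by left; apply: Rmult_lt_0_compat; apply: Rpower_gt0.
rewrite /rankin_weight Rpower_Ropp -Rmult_assoc (Rmult_comm _ (summand m n)) Rmult_assoc.
rewrite -[X in X <= _]Rmult_1_r; apply: Rmult_le_compat_l => //.
have P0 := Rpower_gt0 (INR (m * n)) (1 + eps).
rewrite -{1}(Rinv_r _ (Rgt_not_eq _ _ P0)); apply: Rmult_le_compat_r => //.
by left; apply: Rinv_0_lt_compat.
Qed.

Definition pfactor_exponent (eps : R) (i j : nat) : R :=
  INR (if j == 0 then 0 else i)%N / 2 + INR (if (1 < i + j)%N then i + j else 0)%N / 4
  - (1 + eps) * INR (i + j).

Lemma rankin_weight_pfactor eps p i j : prime p ->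
  rankin_weight eps (p ^ i) (p ^ j) = Rpower (INR p) (pfactor_exponent eps i j).
Proof.
move=> pp; have p0 := prime_gt0 pp.
rewrite /rankin_weight /summand coprime_part_pfactor // -expnD sqfull_pfactor //.
rewrite !Rpower_INRX // -!Rpower_plus /pfactor_exponent; congr Rpower.
by rewrite /Rdiv; ring.
Qed.

Lemma pfactor_exponent_le eps i j : 0 <= eps -> (0 < i + j)%N ->
  pfactor_exponent eps i j + (1 + eps) <= 0 /\
  4 * (pfactor_exponent eps i j + (1 + eps)) <= 2 - INR (i + j).
Proof.
rewrite /pfactor_exponent => e0 k0; case: ltnP => [k2 | k1].
  have c_le : INR (if j == 0 then 0 else i)%N <= INR (i + j) - 1.
    rewrite -(minus_INR _ 1); last by apply/leP.
    apply: le_INR; apply/leP; rewrite minusE subn1.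
    by case: j k0 k2 => [|j] _ _ //=; rewrite addnS leq_addr.
  have k2R : 2 <= INR (i + j) by apply: (le_INR 2); apply/leP.
  split; nra.
have k1R : (i + j = 1)%N by apply/eqP; rewrite eqn_leq k1.
have -> : (if j == 0 then 0 else i)%N = 0%N.
  by case: j k1R {k0 k1} => [|j] //; rewrite addnS => -[]; case: i => // i; rewrite addSn.
rewrite k1R /=; split; lra.
Qed.

Definition root4_half : R := Rpower 2 (- / 4).

Lemma root4_half_pow k : root4_half ^ k = Rpower 2 (INR k * - / 4).
Proof.
by rewrite -Rpower_pow; [rewrite /root4_half Rpower_mult Rmult_comm | exact: Rpower_gt0].
Qed.

Lemma rankin_weight_pfactor_le eps p i j : 0 <= eps -> prime p -> (0 < i + j)%N ->
  rankin_weight eps (p ^ i) (p ^ j)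
  <= 2 * Rpower (INR p) (- (1 + eps)) * root4_half ^ (i + j).
Proof.
move=> e0 pp k0; have [d_le0 d_le] := pfactor_exponent_le e0 k0.
set d := pfactor_exponent eps i j + (1 + eps) in d_le0 d_le.
have p2 : 2 <= INR p by apply: (le_INR 2); apply/leP; exact: prime_gt1.
have shift : Rpower (INR p) d <= Rpower 2 d.
  rewrite -(Ropp_involutive d) !(Rpower_Ropp _ (- d)).
  apply: Rinv_le_contravar; first exact: Rpower_gt0.
  by apply: Rle_Rpower_l; lra.
have lower : Rpower 2 d <= Rpower 2 (/ 2) * root4_half ^ (i + j).
  by rewrite root4_half_pow -Rpower_plus; apply: Rle_Rpower; lra.
have sqrt2 : Rpower 2 (/ 2) <= 2.
  by rewrite -[X in _ <= X](Rpower_1 2); [apply: Rle_Rpower | ]; lra.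
have r_pos : 0 < root4_half ^ (i + j) by apply: pow_lt; exact: Rpower_gt0.
have e_split : pfactor_exponent eps i j = - (1 + eps) + d by rewrite /d; ring.
rewrite rankin_weight_pfactor // e_split Rpower_plus (Rmult_comm 2) Rmult_assoc.
apply: Rmult_le_compat_l; first by left; exact: Rpower_gt0.
apply: Rle_trans shift (Rle_trans _ _ _ lower _).
by apply: Rmult_le_compat_r; lra.
Qed.

Lemma root4_half_le : root4_half <= 6 / 7.
Proof.
have r_pos : 0 < root4_half by exact: Rpower_gt0.
have r4 : root4_half ^ 4 = / 2.
  rewrite root4_half_pow (_ : INR 4 * - / 4 = - 1); last by rewrite /=; field.
  by rewrite Rpower_Ropp Rpower_1 //; lra.
apply: Rnot_lt_le => lt67.
have : (6 / 7) ^ 4 <= root4_half ^ 4 by apply: pow_incr; lra.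
by rewrite r4 /=; lra.
Qed.

Lemma sum_root4_half_pow_le n : \big[Rplus/0]_(i < n) root4_half ^ i <= 7.
Proof.
have r_pos : 0 < root4_half by exact: Rpower_gt0.
have r_le := root4_half_le.
have geom : (\big[Rplus/0]_(i < n) root4_half ^ i) * (1 - root4_half) = 1 - root4_half ^ n.
  elim: n => [|n IH]; first by rewrite big_ord0 /=; ring.
  by rewrite big_ord_recr /= Rmult_plus_distr_r IH /=; ring.
have rn_ge0 : 0 <= root4_half ^ n by apply: pow_le; lra.
have sum_ge0 : 0 <= \big[Rplus/0]_(i < n) root4_half ^ i.
  by apply: sumR_ge0 => i _; apply: pow_le; lra.
nra.
Qed.

Lemma local_factor_le eps p N : 0 <= eps -> prime p ->
  \big[Rplus/0]_(ij : 'I_N.+1 * 'I_N.+1) rankin_weight eps (p ^ ij.1) (p ^ ij.2)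
  <= 1 + 98 * Rpower (INR p) (- (1 + eps)).
Proof.
move=> e0 pp; set T := Rpower (INR p) (- (1 + eps)).
have T_pos : 0 < T by exact: Rpower_gt0.
have pointwise (i j : nat) : rankin_weight eps (p ^ i) (p ^ j)
    <= (if (i == 0%N) && (j == 0%N) then 1 else 0) + 2 * T * root4_half ^ i * root4_half ^ j.
  have r_pos k : 0 < root4_half ^ k by apply: pow_lt; exact: Rpower_gt0.
  case: ifP => [/andP[/eqP-> /eqP->] | ij0]; first by rewrite rankin_weight11; nra.
  rewrite Rplus_0_l Rmult_assoc -pow_add; apply: rankin_weight_pfactor_le => //.
  by rewrite addn_gt0 !lt0n; case: (i == 0%N) ij0; case: (j == 0%N).
apply: Rle_trans; first by apply: ler_sumR => ij _; exact: pointwise.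
(* 98 = 2 * 7 * 7: two geometric series in root4_half, each at most 7 *)
rewrite big_split /= -big_mkcond /=.
rewrite (eq_bigl (pred1 (ord0, ord0))); last by move=> [a b] /=; rewrite xpair_eqE.
rewrite big_pred1_eq.
rewrite -(pair_bigA _ (fun i j : 'I_N.+1 => 2 * T * root4_half ^ i * root4_half ^ j)) /=.
rewrite (_ : \big[Rplus/0]_(i < N.+1) \big[Rplus/0]_(j < N.+1) _
   = 2 * T * ((\big[Rplus/0]_(i < N.+1) root4_half ^ i) * \big[Rplus/0]_(j < N.+1) root4_half ^ j)).
  have g_le := sum_root4_half_pow_le N.+1.
  set g := \big[Rplus/0]_(i < N.+1) root4_half ^ i in g_le *.
  have g_ge0 : 0 <= g by apply: sumR_ge0 => i _; apply: pow_le; left; exact: Rpower_gt0.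
  have : g * g <= 7 * 7 by apply: Rmult_le_compat.
  nra.
rewrite big_distrlr big_distrr /=; apply: eq_bigr => i _.
by rewrite big_distrr; apply: eq_bigr => j _ /=; ring.
Qed.

Lemma Rpower_neg_step eps x : 0 < eps -> 1 < x ->
  eps * Rpower x (- (1 + eps)) <= Rpower (x - 1) (- eps) - Rpower x (- eps).
Proof.
(* mean value inequality for t |-> t^-eps on [x - 1, x], via 1 + u <= exp u *)
move=> e0 x1; rewrite /Rpower.
set a := ln (x - 1); set b := ln x.
have ea : exp a = x - 1 by rewrite /a exp_ln //; lra.
have eb : exp b = x by rewrite /b exp_ln //; lra.
have log_gap : b - a >= / x.
  have := exp_ineq1_le (a - b).
  rewrite /Rminus exp_plus exp_Ropp ea eb (_ : (x + - 1) * / x = 1 - / x); last by field; lra.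
  lra.
have := exp_ineq1_le (eps * (b - a)).
have -> : exp (- eps * a) = exp (- eps * b) * exp (eps * (b - a)).
  by rewrite -exp_plus; f_equal; ring.
have -> : exp (- (1 + eps) * b) = exp (- eps * b) * / x.
  by rewrite -eb -exp_Ropp -exp_plus; f_equal; ring.
have := exp_pos (- eps * b).
have : eps * (b - a) >= eps * / x by apply: Rmult_ge_compat_l; lra.
nra.
Qed.

Lemma sum_Rpower_tail_le eps N : 0 < eps ->
  \big[Rplus/0]_(n < N.+2 | (1 < n)%N) Rpower (INR n) (- (1 + eps))
  <= / eps * (1 - Rpower (INR N.+1) (- eps)).
Proof.
move=> e0; elim: N => [|N IH].
  by rewrite big_mkcond /= !big_ord_recr big_ord0 /= Rpower1; lra.
rewrite big_mkcond big_ord_recr -big_mkcond.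
rewrite (_ : (if (1 < @ord_max N.+2)%N then _ else 0) = Rpower (INR N.+2) (- (1 + eps))) //.
have x1 : 1 < INR N.+2 by apply: (lt_INR 1); apply/ltP.
have := Rpower_neg_step e0 x1.
rewrite (_ : INR N.+2 - 1 = INR N.+1); last by rewrite (S_INR N.+1); ring.
move=> step; apply: Rle_trans (Rplus_le_compat_r _ _ _ IH) _.
have inv_pos := Rinv_0_lt_compat _ e0.
have : / eps * (eps * Rpower (INR N.+2) (- (1 + eps)))
       <= / eps * (Rpower (INR N.+1) (- eps) - Rpower (INR N.+2) (- eps)).
  by apply: Rmult_le_compat_l; lra.
rewrite -Rmult_assoc Rinv_l ?Rmult_1_l; lra.
Qed.

Lemma sum_primes_upto_Rpower_le eps N : 0 < eps ->
  \big[Rplus/0]_(p <- primes_upto N) Rpower (INR p) (- (1 + eps)) <= / eps.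
Proof.
move=> e0; set f := fun n : nat => Rpower (INR n) (- (1 + eps)).
have f_ge0 n : 0 <= f n by left; exact: Rpower_gt0.
have primes_le : \big[Rplus/0]_(p <- primes_upto N) f p
                 <= \big[Rplus/0]_(n < N.+2 | (1 < n)%N) f n.
  rewrite big_filter -[iota 0 N.+1]/(index_iota 0 N.+1) (big_mkord prime f).
  rewrite [X in _ <= X]big_mkcond big_ord_recr /=.
  rewrite -[X in X <= _]Rplus_0_r; apply: Rplus_le_compat.
    rewrite big_mkcond; apply: ler_sumR => n _.
    case: ifP => [/prime_gt1 -> | _]; first exact: Rle_refl.
    by case: ifP => _; [exact: f_ge0 | exact: Rle_refl].
  by case: ifP => _; [exact: f_ge0 | exact: Rle_refl].
apply: (Rle_trans _ _ _ primes_le).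
apply: (Rle_trans _ _ _ (sum_Rpower_tail_le N e0)).
have := Rpower_gt0 (INR N.+1) (- eps); have := Rinv_0_lt_compat _ e0; nra.
Qed.

Lemma rankin_sum_le eps N : 0 < eps ->
  \big[Rplus/0]_(x : 'I_N.+1 * 'I_N.+1 | (0 < x.1)%N && (0 < x.2)%N) rankin_weight eps x.1 x.2
  <= exp (98 / eps).
Proof.
move=> e0; have e0' : 0 <= eps by lra.
have euler := sum_le_prod_local_factors (rankin_weight_ge0 eps) (rankin_weight11 eps)
                 (@rankin_weightM eps) N.
apply: (Rle_trans _ _ _ euler).
have p_prime p : p \in primes_upto N -> prime p by rewrite mem_filter => /andP[].
rewrite big_seq_cond; apply: Rle_trans.
  apply: ler_prodR => p /andP[/p_prime pp _]; split.
    by apply: sumR_ge0 => ij _; exact: rankin_weight_ge0.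
  exact: local_factor_le.
rewrite -big_seq_cond.
apply: (Rle_trans _ _ _ (prodR_1addR_le_exp (primes_upto N) _)).
  by move=> p _; apply: Rmult_le_pos; [lra | left; exact: Rpower_gt0].
apply: exp_le; rewrite -big_distrr /= /Rdiv.
by apply: Rmult_le_compat_l; [lra | exact: sum_primes_upto_Rpower_le].
Qed.

Lemma leb_leq m n : Nat.leb m n = (m <= n)%N.
Proof. by case: (Nat.leb_spec0 m n); case: leP. Qed.

Lemma S_le_rankin_sum eps N : 0 <= eps ->
  S N <= Rpower (INR N) (1 + eps) *
    \big[Rplus/0]_(x : 'I_N.+1 * 'I_N.+1 | (0 < x.1)%N && (0 < x.2)%N)
      rankin_weight eps x.1 x.2.
Proof.
move=> e0; rewrite /S sum_f_R0_big; under eq_bigr do rewrite sum_f_R0_big.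
rewrite pair_bigA big_distrr [X in _ <= X]big_mkcond.
apply: ler_sumR => -[m n] _; rewrite !leb_leq /=.
have w_ge0 : 0 <= Rpower (INR N) (1 + eps) * rankin_weight eps m n.
  by apply: Rmult_le_pos; [left; exact: Rpower_gt0 | exact: rankin_weight_ge0].
case: ifP => [/andP[/andP[m0 n0] mnN] | _].
  by rewrite m0 n0; exact: summand_le_rankin_weight.
by case: ifP => _; [exact: w_ge0 | exact: Rle_refl].
Qed.

Theorem mainTheorem7 :
  forall eps : R, 0 < eps ->
  exists C : R, 0 < C /\
    forall N : nat, (le 1 N) -> S N <= C * Rpower (INR N) (1 + eps).
Proof.
move=> eps e0; exists (exp (98 / eps)); split=> [|N _]; first exact: exp_pos.
have e0' : 0 <= eps by lra.
rewrite Rmult_comm; apply: Rle_trans (S_le_rankin_sum N e0') _.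
apply: Rmult_le_compat_l; first by left; exact: Rpower_gt0.
exact: rankin_sum_le.
Qed.
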